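(* For $k\ge2$, positive integers $a_1,\ldots,a_k$ and $j\ge1$, \[\bigl|Q_j^{a_1,\ldots,a_k}\bigr|=\sum_{\substack{(l_2,\ldots,l_k):\ l_c\in[0,a_c]\\ l_2+\cdots+l_k=j-a_1}}\ \prod_{c=2}^k\binom{a_c}{l_c}\,P\!\Bigl(a_1+\sum_{i=2}^{c-1}l_i,\ a_c-l_c\Bigr),\] where $P(m,l)=\binom{m}{l}\,l!$ (which is $0$ if $l>m$).
   Context: For positive integers $a_1,\ldots,a_k$ with $N=\sum a_m$, let $A_i=a_1+\cdots+a_i$ ($A_0=0$) and $I_i=\{A_{i-1}+1,\ldots,A_i\}$. $Q_j^{a_1,\ldots,a_k}$ is the set of all partitions of $[N]$ into exactly $j$ nonempty blocks such that no block contains two distinct elements of the same segment $I_i$. *)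

From mathcomp Require Import all_boot.
Set Implicit Arguments. Unset Strict Implicit. Unset Printing Implicit Defensive.

(* The sequence a = [:: a_1; ...; a_k] (0-based in Rocq: a_{i+1} = nth 0 a i).
   [N] = {1..N} is represented by 'I_N = {0..N-1}; the segment I_{i+1}
   is {A_i, ..., A_{i+1}-1} (0-based), where A_i = a_1 + ... + a_i. *)
Definition seg_start (a : seq nat) (i : nat) : nat := sumn (take i a).

Definition same_seg (a : seq nat) (x y : nat) : bool :=
  [exists i : 'I_(size a),
     (seg_start a i <= x < seg_start a i.+1) &&
     (seg_start a i <= y < seg_start a i.+1)].

Definition Qset (a : seq nat) (j : nat) : {set {set {set 'I_(sumn a)}}} :=
  [set P : {set {set 'I_(sumn a)}} |
     [&& partition P [set: 'I_(sumn a)], #|P| == j &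
         [forall B in P, forall x in B, forall y in B,
            (x != y) ==> ~~ same_seg a x y]]].

Definition Pn (m l : nat) : nat := 'C(m, l) * l`!.

From mathcomp Require Import all_boot.
From mathcomp Require Import zify.
Set Implicit Arguments. Unset Strict Implicit. Unset Printing Implicit Defensive.

(* Label each point of [N] by its segment, so that Q_j consists of the
   partitions none of whose blocks contains two points with equal labels.
   Adding a point x to a ground set D, deleting x again from an admissible
   partition into j+1 blocks leaves either a partition into j blocks (x was a
   singleton) or one into j+1 blocks, in which x sat in one of the j+1-e blocks
   avoiding the e points of D labelled like x (these lie in distinct blocks).
   Iterating over a whole segment of size n gives the convolution
     q'(j) = sum_l C(n,l) P(j-l, n-l) q(j-l),
   l counting the new singleton blocks; unrolling it over the segments
   a_2, ..., a_k, starting from the a_1 singletons, gives the formula. *)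

Section AdmissiblePartitions.
Variables (T : finType) (L : eqType) (lab : T -> L).

Definition admissible (P : {set {set T}}) :=
  [forall B in P, forall x in B, forall y in B, (x != y) ==> (lab x != lab y)].

Definition admissible_partitions (D : {set T}) (j : nat) : {set {set {set T}}} :=
  [set P : {set {set T}} | [&& partition P D, #|P| == j & admissible P]].

Lemma admissibleP (P : {set {set T}}) :
  reflect (forall B, B \in P -> forall x y, x \in B -> y \in B -> x != y -> lab x != lab y)
          (admissible P).
Proof.
apply: (iffP forallP) => [H B BP x y xB yB nxy|H B].
  by have /implyP/(_ BP)/forallP/(_ x)/implyP/(_ xB)/forallP/(_ y)/implyP/(_ yB)/implyP := H B; apply.
apply/implyP=> BP; apply/forallP=> x; apply/implyP=> xB; apply/forallP=> y; apply/implyP=> yB.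
by apply/implyP => nxy; apply: H BP x y xB yB nxy.
Qed.

Lemma admissible_refine (P P' : {set {set T}}) :
  admissible P -> (forall B', B' \in P' -> exists2 B, B \in P & B' \subset B) ->
  admissible P'.
Proof.
move=> /admissibleP ok H; apply/admissibleP => B' B'P y z yB zB nyz.
case: (H B' B'P) => B BP /subsetP s; exact: ok _ BP _ _ (s _ yB) (s _ zB) nyz.
Qed.

Lemma card_admissible_partitions_set0 j :
  #|admissible_partitions set0 j| = (j == 0).
Proof.
case: j => [|j].
  rewrite (_ : admissible_partitions set0 0 = [set set0]) ?cards1 //.
  apply/setP => P; rewrite !inE partition_set0; apply/idP/eqP => [/and3P[/eqP//]|->].
  by rewrite eqxx cards0 eqxx; apply/forallP => B; rewrite inE.
apply/eqP; rewrite cards_eq0; apply/eqP/setP => P; rewrite !inE partition_set0.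
by apply/negP => /and3P[/eqP-> ]; rewrite cards0.
Qed.

Definition remove_point (x : T) (P : {set {set T}}) :=
  let B := pblock P x in
  if B :\ x == set0 then P :\ B else (B :\ x) |: (P :\ B).

Definition insert_point (x : T) (P : {set {set T}}) (B : {set T}) :=
  (x |: B) |: (P :\ B).

Section AddPoint.
Variables (x : T) (D : {set T}).
Hypothesis xD : x \notin D.

Lemma pblock_point P : partition P (x |: D) -> pblock P x \in P /\ x \in pblock P x.
Proof.
move=> pP; have xc : x \in cover P by rewrite (cover_partition pP) setU11.
by rewrite pblock_mem // mem_pblock.
Qed.

Lemma partition_notin_block P B : partition P D -> B \in P -> x \notin B.
Proof.
move=> pP BP; apply/negP=> xB; have := subsetP (partitionS pP BP) x xB.
by rewrite (negPf xD).
Qed.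

Lemma shrunk_block_notin P B : partition P (x |: D) -> B \in P -> x \in B ->
  B :\ x != set0 -> B :\ x \notin P :\ B.
Proof.
move=> pP BP xB /set0Pn[y yB]; apply/negP => /setD1P[ne BxP].
have tP := partition_trivIset pP.
have e1 : pblock P y = B :\ x by apply: def_pblock.
have e2 : pblock P y = B by apply: def_pblock => //; move: yB; rewrite inE => /andP[].
by move: ne; rewrite -e1 e2 eqxx.
Qed.

Lemma remove_point_partition P : partition P (x |: D) -> partition (remove_point x P) D.
Proof.
move=> pP; case: (pblock_point pP) => B0P xB0; rewrite /remove_point.
set B0 := pblock P x in B0P xB0 *.
have sB := partitionS pP B0P.
have pD := partitionD1 pP B0P.
case: ifP => [/eqP e|/negbT ne].
  suff -> : D = (x |: D) :\: B0 by [].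
  apply/setP=> y; rewrite !inE; case: (y =P x) => [->|nyx]; first by rewrite (negPf xD) xB0.
  have : y \notin B0 :\ x by rewrite e inE.
  by rewrite !inE; move/eqP: nyx => nyx; rewrite nyx /= => /negPf ->.
have -> : D = (B0 :\ x) :|: ((x |: D) :\: B0).
  apply/setP=> y; have := subsetP sB y; rewrite !inE.
  case: (y =P x) => [->|nyx] /=; first by rewrite (negPf xD) xB0.
  by case: (y \in B0) => //= ->.
apply: partitionU1 => //.
by rewrite disjoints_subset; apply/subsetP => y; rewrite !inE => /andP[_ ->].
Qed.

Lemma remove_point_admissible P :
  partition P (x |: D) -> admissible P -> admissible (remove_point x P).
Proof.
move=> pP ok; apply: (admissible_refine ok) => B'; rewrite /remove_point.
case: ifP => _; first by move=> /setD1P[_ h]; exists B'.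
case/setU1P => [->|/setD1P[_ h]]; last by exists B'.
by exists (pblock P x); [case: (pblock_point pP)| apply: subD1set].
Qed.

Lemma card_remove_point P : partition P (x |: D) ->
  #|remove_point x P| = if pblock P x :\ x == set0 then #|P|.-1 else #|P|.
Proof.
move=> pP; case: (pblock_point pP) => B0P xB0; rewrite /remove_point.
rewrite (cardsD1 (pblock P x) P) B0P.
case: ifP => [_|/negbT ne] //.
by rewrite cardsU1 (shrunk_block_notin pP B0P xB0 ne).
Qed.

Lemma partition_add_singleton P : partition P D -> partition ([set x] |: P) (x |: D).
Proof.
move=> pP; apply: partitionU1 => //; last by rewrite disjoints1.
by apply/set0Pn; exists x; rewrite set11.
Qed.

Lemma singleton_notin_partition P : partition P D -> [set x] \notin P.
Proof.
by move=> pP; apply/negP=> h; have := partition_notin_block pP h; rewrite set11.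
Qed.

Lemma remove_point_add_singleton P : partition P D -> remove_point x ([set x] |: P) = P.
Proof.
move=> pP; have tP := partition_trivIset (partition_add_singleton pP).
rewrite /remove_point (def_pblock tP (setU11 _ _) (set11 x)) setDv eqxx setU1K //.
exact: singleton_notin_partition.
Qed.

Lemma insert_point_partition P B :
  partition P D -> B \in P -> partition (insert_point x P B) (x |: D).
Proof.
move=> pP BP; have pD := partitionD1 pP BP.
have sB := partitionS pP BP.
have -> : x |: D = (x |: B) :|: (D :\: B).
  apply/setP => y; have := subsetP sB y; rewrite !inE.
  by case: (y == x); case: (y \in B); case: (y \in D) => //= ->.
apply: partitionU1 => //; first by apply/set0Pn; exists x; rewrite setU11.
rewrite disjoints_subset; apply/subsetP => y; rewrite !inE.
by case/orP => [/eqP->|->]; rewrite ?(negPf xD) ?andbF.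
Qed.

Lemma pblock_insert_point P B :
  partition P D -> B \in P -> pblock (insert_point x P B) x = x |: B.
Proof.
move=> pP BP; have tP := partition_trivIset (insert_point_partition pP BP).
exact: def_pblock tP (setU11 _ _) (setU11 _ _).
Qed.

Lemma enlarged_block_notin P B : partition P D -> x |: B \notin P :\ B.
Proof.
move=> pP; apply/negP => /setD1P[_ h]; have := partition_notin_block pP h.
by rewrite setU11.
Qed.

Lemma remove_point_insert P B :
  partition P D -> B \in P -> remove_point x (insert_point x P B) = P.
Proof.
move=> pP BP; rewrite /remove_point pblock_insert_point //.
rewrite setU1K ?(partition_notin_block pP BP) // (negPf (partition_neq0 pP BP)).
by rewrite /insert_point setU1K ?enlarged_block_notin // setD1K.
Qed.

Lemma card_insert_point P B :
  partition P D -> B \in P -> #|insert_point x P B| = #|P|.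
Proof.
by move=> pP BP; rewrite cardsU1 enlarged_block_notin // (cardsD1 B P) BP.
Qed.

Definition free_blocks (P : {set {set T}}) :=
  [set B in P | [forall y in B, lab y != lab x]].

Lemma insert_point_admissible P B :
  admissible P -> B \in free_blocks P -> admissible (insert_point x P B).
Proof.
move=> okP; rewrite inE => /andP[BP /forallP av].
apply/admissibleP => C /setU1P[->|/setD1P[_ CP]] y z; last by move/admissibleP: okP; apply.
have avB u : u \in B -> lab u != lab x by move=> uB; have /implyP := av u; apply.
rewrite !inE => /orP[/eqP->|yB] /orP[/eqP->|zB]; rewrite ?eqxx //.
- by move=> _; rewrite eq_sym avB.
- by move=> _; rewrite avB.
by move/admissibleP: okP => ok; apply: ok BP _ _ yB zB.
Qed.

Lemma card_fiber_singleton j P : P \in admissible_partitions D j ->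
  #|[set Q in admissible_partitions (x |: D) j.+1 | remove_point x Q == P]| = 1.
Proof.
rewrite inE => /and3P[pP /eqP cP okP].
rewrite (_ : [set _ in _ | _] = [set [set x] |: P]) ?cards1 //.
apply/setP => Q; rewrite !inE; apply/idP/eqP.
  case/andP => /and3P[pQ /eqP cQ okQ] /eqP rQ.
  have := card_remove_point pQ; rewrite rQ cP cQ.
  case: ifP => [/eqP e _|_ /eqP]; last by rewrite ltn_eqF.
  case: (pblock_point pQ) => B0Q xB0.
  have eB : pblock Q x = [set x].
    apply/setP => y; rewrite inE; apply/idP/eqP => [yB|->//].
    apply/eqP; apply: contraT => nyx.
    have : y \in pblock Q x :\ x by apply/setD1P; split.
    by rewrite e inE.
  by move: rQ; rewrite /remove_point e eqxx => <-; rewrite -eB setD1K.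
move=> ->; rewrite partition_add_singleton // cardsU1 singleton_notin_partition //.
rewrite cP remove_point_add_singleton // !eqxx andbT.
apply/admissibleP => B /setU1P[->|BP] y z; first by rewrite !inE => /eqP-> /eqP->; rewrite eqxx.
by move/admissibleP: okP; apply.
Qed.

Lemma card_fiber_insert j P : P \in admissible_partitions D j.+1 ->
  #|[set Q in admissible_partitions (x |: D) j.+1 | remove_point x Q == P]| =
  #|free_blocks P|.
Proof.
rewrite inE => /and3P[pP /eqP cP okP].
have freeP B : B \in free_blocks P -> B \in P by rewrite inE => /andP[].
rewrite (_ : [set _ in _ | _] = insert_point x P @: free_blocks P).
  apply: card_in_imset => B1 B2 /freeP B1P /freeP B2P e.
  have := pblock_insert_point pP B1P; rewrite e pblock_insert_point // => e2.
  rewrite -(setU1K (partition_notin_block pP B1P)) -e2.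
  by rewrite setU1K // (partition_notin_block pP B2P).
apply/setP => Q; rewrite !inE; apply/idP/imsetP.
  case/andP => /and3P[pQ /eqP cQ okQ] /eqP rQ.
  have := card_remove_point pQ; rewrite rQ cP cQ.
  case: ifP => [_ /eqP|/negbT ne _]; first by rewrite eq_sym ltn_eqF.
  case: (pblock_point pQ) => B0Q xB0.
  exists (pblock Q x :\ x).
    rewrite inE -rQ /remove_point (negPf ne) setU11 /=.
    apply/forallP => y; apply/implyP => /setD1P[nyx yB].
    by move/admissibleP: okQ => /(_ _ B0Q y x yB xB0 nyx).
  rewrite /insert_point setD1K // -rQ /remove_point (negPf ne) setU1K; last first.
    exact: shrunk_block_notin pQ B0Q xB0 ne.
  by rewrite setD1K.
case=> B /[dup] /freeP BP Bfree ->.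
rewrite insert_point_partition // card_insert_point // cP eqxx.
by rewrite insert_point_admissible //= remove_point_insert.
Qed.

(* The points of D labelled like x lie in pairwise distinct blocks, which are
   exactly the non-free ones. *)
Lemma card_free_blocks P : partition P D -> admissible P ->
  #|free_blocks P| = #|P| - #|[set y in D | lab y == lab x]|.
Proof.
move=> pP okP; set Dx := [set y in D | lab y == lab x].
have tP := partition_trivIset pP.
have cD := cover_partition pP.
have Dx_cover y : y \in Dx -> y \in cover P by rewrite cD inE => /andP[].
have -> : free_blocks P = P :\: (pblock P @: Dx).
  apply/setP => B; rewrite !inE; case BP: (B \in P) => //=; rewrite ?andbF // andbT.
  apply/forallP/negP => [av /imsetP[y yD eB]|nim y].
    have yB : y \in B by rewrite eB mem_pblock Dx_cover.
    by have := av y; rewrite yB /=; move: yD; rewrite inE => /andP[_ ->].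
  apply/implyP => yB; apply/negP => e; apply: nim; apply/imsetP; exists y.
    by rewrite inE e (subsetP (partitionS pP BP)).
  by rewrite (def_pblock tP BP yB).
rewrite cardsD (setIidPr _); last first.
  by apply/subsetP => _ /imsetP[y /Dx_cover yD ->]; apply: pblock_mem.
rewrite card_in_imset // => y1 y2 y1D y2D e.
have y1B : y1 \in pblock P y2 by rewrite -e mem_pblock Dx_cover.
have y2B : y2 \in pblock P y2 by rewrite mem_pblock Dx_cover.
apply/eqP; apply: contraT => ne.
move/admissibleP: okP => /(_ _ (pblock_mem (Dx_cover _ y2D)) _ _ y1B y2B ne).
by move: y1D y2D; rewrite !inE => /andP[_ /eqP->] /andP[_ /eqP->]; rewrite eqxx.
Qed.

Lemma card_admissible_partitions_add_point j :
  #|admissible_partitions (x |: D) j.+1| =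
  #|admissible_partitions D j| +
  (j.+1 - #|[set y in D | lab y == lab x]|) * #|admissible_partitions D j.+1|.
Proof.
rewrite -sum1_card.
rewrite (partition_big (remove_point x)
  [predU (mem (admissible_partitions D j)) & (mem (admissible_partitions D j.+1))]); last first.
  move=> Q; rewrite inE => /and3P[pQ /eqP cQ okQ]; rewrite !inE.
  rewrite remove_point_partition // remove_point_admissible // card_remove_point // cQ /=.
  by case: ifP => _; rewrite eqxx ?orbT.
rewrite bigU /=; last first.
  rewrite disjoints_subset; apply/subsetP => P; rewrite !inE => /and3P[_ /eqP-> _].
  by apply/negP => /and3P[_ /eqP /n_Sn].
congr (_ + _).
  rewrite -[RHS]sum1_card; apply: eq_bigr => P PQ.
  rewrite [RHS](esym (card_fiber_singleton PQ)) -[RHS]sum1_card; apply: eq_bigl => Q; by rewrite !inE.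
rewrite mulnC -sum_nat_const; apply: eq_bigr => P PQ.
have := PQ; rewrite inE => /and3P[pP /eqP cP okP].
rewrite -[in RHS]cP -card_free_blocks // -(card_fiber_insert PQ) -sum1_card.
by apply: eq_bigl => Q; rewrite !inE.
Qed.

Lemma admissible_partitions0 : #|admissible_partitions (x |: D) 0| = 0.
Proof.
apply/eqP; rewrite cards_eq0; apply/eqP/setP => P; rewrite !inE.
apply/negP => /and3P[pP /eqP /cards0_eq P0 _].
by move: (cover_partition pP); rewrite P0 /cover big_set0 => /setP/(_ x); rewrite !inE eqxx.
Qed.

End AddPoint.
End AdmissiblePartitions.

Lemma PnS m l : Pn m l.+1 = Pn m l * (m - l).
Proof. by rewrite /Pn !bin_ffact ffactnSr. Qed.

Lemma Pnn0 m : Pn m 0 = 1.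
Proof. by rewrite /Pn bin0. Qed.

Lemma Pn0S l : Pn 0 l.+1 = 0.
Proof. by rewrite /Pn bin0n. Qed.

(* Pascal's rule together with Pn m l.+1 = Pn m l * (m - l): the convolution
   obeys the recursion of card_admissible_partitions_add_point. *)
Lemma Pn_convolutionS (c : nat -> nat) n j :
  \sum_(0 <= l < j.+2) 'C(n.+1, l) * Pn (j.+1 - l) (n.+1 - l) * c (j.+1 - l) =
  \sum_(0 <= l < j.+1) 'C(n, l) * Pn (j - l) (n - l) * c (j - l) +
  (j.+1 - n) * \sum_(0 <= l < j.+2) 'C(n, l) * Pn (j.+1 - l) (n - l) * c (j.+1 - l).
Proof.
rewrite big_nat_recl // [X in (j.+1 - n) * X]big_nat_recl //= !subn0 !bin0.
rewrite (eq_bigr (fun l => 'C(n, l.+1) * Pn (j - l) (n - l) * c (j - l) +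
                         'C(n, l) * Pn (j - l) (n - l) * c (j - l))); last first.
  by move=> l _; rewrite !subSS binS !mulnDl.
rewrite big_split /= mulnDr [RHS]addnC addnA; congr (_ + _).
rewrite big_distrr /= PnS; congr (_ + _).
  by rewrite !mul1n [Pn _ _ * (_ - _)]mulnC mulnA.
apply: eq_bigr => l _; rewrite subSS.
case: (ltnP n l.+1) => h; first by rewrite bin_small // !mul0n muln0.
have -> : n - l = (n - l.+1).+1 by lia.
rewrite PnS (_ : j - l - (n - l.+1) = j.+1 - n); last by lia.
lia.
Qed.

(* Adding n points with a fresh common label: l of them become new singleton
   blocks, the other n - l go injectively into the j - l old blocks. *)
Lemma card_admissible_partitions_add_class (T : finType) (L : eqType) (lab : T -> L)
    (D S : {set T}) (s : L) :
  (forall y, y \in D -> lab y != s) -> (forall y, y \in S -> lab y = s) ->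
  forall j, #|admissible_partitions lab (D :|: S) j| =
    \sum_(0 <= l < j.+1)
      'C(#|S|, l) * Pn (j - l) (#|S| - l) * #|admissible_partitions lab D (j - l)|.
Proof.
move=> hD; move cS: #|S| => n; elim: n S cS => [|n IH] S cS hS j.
  move/cards0_eq: cS => ->; rewrite setU0 big_nat_recl // subn0 bin0 Pnn0 !mul1n.
  by rewrite big1 ?addn0 // => i _; rewrite bin0n.
have [x xS] : exists x, x \in S by apply/set0Pn; rewrite -cards_eq0 cS.
set S' := S :\ x.
have cS' : #|S'| = n by move: cS; rewrite (cardsD1 x S) xS add1n => -[].
have eU : D :|: S = x |: (D :|: S') by rewrite -(setD1K xS) setUCA.
have hS' y : y \in S' -> lab y = s by move=> /setD1P[_ /hS].
have xn : x \notin D :|: S'.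
  rewrite in_setU negb_or setD11 andbT; apply/negP => /hD; by rewrite (hS x xS) eqxx.
have eDx : [set y in D :|: S' | lab y == lab x] = S'.
  apply/setP => y; rewrite !inE (hS x xS).
  apply/idP/idP => [/andP[/orP[yD|//] ys]|h]; first by move: (hD y yD); rewrite ys.
  by rewrite h orbT /=; move/andP: h => [_ /hS ->].
case: j => [|j].
  by rewrite eU admissible_partitions0 // big_nat1 sub0n subn0 Pn0S muln0 mul0n.
rewrite eU card_admissible_partitions_add_point // eDx cS' !IH //.
by rewrite (Pn_convolutionS (fun m => #|admissible_partitions lab D m|)).
Qed.

Section Segments.
Variable a : seq nat.

Lemma seg_start_le_sumn i : seg_start a i <= sumn a.
Proof. by rewrite /seg_start -{2}(cat_take_drop i a) sumn_cat leq_addr. Qed.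

Lemma seg_start_mono i i' : i <= i' -> seg_start a i <= seg_start a i'.
Proof.
move=> h; rewrite /seg_start -(take_takel a h).
by rewrite -{2}(cat_take_drop i (take i' a)) sumn_cat leq_addr.
Qed.

Lemma seg_startS i : i < size a -> seg_start a i.+1 = seg_start a i + nth 0 a i.
Proof. by move=> h; rewrite /seg_start (take_nth 0 h) -cats1 sumn_cat /= addn0. Qed.

Lemma seg_start0 : seg_start a 0 = 0.
Proof. by rewrite /seg_start take0. Qed.

Lemma seg_start_size : seg_start a (size a) = sumn a.
Proof. by rewrite /seg_start take_size. Qed.

Lemma nth_le_sumn i : i < size a -> nth 0 a i <= sumn a.
Proof. by move=> hi; have := seg_start_le_sumn i.+1; rewrite seg_startS //; lia. Qed.

Definition in_seg i (x : nat) := seg_start a i <= x < seg_start a i.+1.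

Lemma in_seg_inj x i i' : in_seg i x -> in_seg i' x -> i = i'.
Proof.
rewrite /in_seg => /andP[h1 h2] /andP[h3 h4].
by case: (ltngtP i i') => // /seg_start_mono; lia.
Qed.

Lemma in_seg_exists x : x < sumn a -> exists i : 'I_(size a), in_seg i x.
Proof.
move=> hx.
have ex : exists k, x < seg_start a k by exists (size a); rewrite seg_start_size.
case: (ex_minnP ex) => [[|i]] Pm minm; first by rewrite seg_start0 in Pm.
have hi : i < size a.
  rewrite ltnNge; apply/negP => h.
  have := minm (size a); rewrite seg_start_size => /(_ hx); lia.
exists (Ordinal hi); rewrite /in_seg /= Pm andbT leqNgt; apply/negP => /minm; lia.
Qed.

Definition seg_of (x : 'I_(sumn a)) : option 'I_(size a) :=
  [pick i : 'I_(size a) | in_seg i x].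

Lemma seg_ofE (x : 'I_(sumn a)) i : (seg_of x == Some i) = in_seg i x.
Proof.
rewrite /seg_of; case: pickP => [i' h|h] /=; last by rewrite h.
by apply/eqP/idP => [[<-]//|hi]; congr Some; apply: val_inj; exact: in_seg_inj h hi.
Qed.

Lemma same_segE (x y : 'I_(sumn a)) : same_seg a x y = (seg_of x == seg_of y).
Proof.
apply/existsP/eqP => [[i /andP[hx hy]]|e].
  by move: hx hy; rewrite -/(in_seg i x) -/(in_seg i y) -!seg_ofE => /eqP-> /eqP->.
case: (in_seg_exists (ltn_ord x)) => i hi; exists i.
by rewrite -/(in_seg i x) -/(in_seg i y) -!seg_ofE -e andbb seg_ofE.
Qed.

Lemma QsetE j : Qset a j = admissible_partitions seg_of [set: 'I_(sumn a)] j.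
Proof.
apply/setP => P; rewrite !inE; congr [&& _, _ & _].
apply: eq_forallb => B; congr (_ ==> _); apply: eq_forallb => x; congr (_ ==> _).
by apply: eq_forallb => y; congr (_ ==> _); rewrite same_segE.
Qed.

Definition seg_prefix i := [set x : 'I_(sumn a) | x < seg_start a i].
Definition seg_set i := [set x : 'I_(sumn a) | in_seg i x].

Lemma card_ord_lt h : h <= sumn a -> #|[set x : 'I_(sumn a) | x < h]| = h.
Proof.
move=> hN.
have -> : [set x : 'I_(sumn a) | x < h] = [set widen_ord hN y | y in 'I_h].
  apply/setP => x; rewrite inE; apply/idP/imsetP => [xh|[y _ ->]]; last by rewrite /= ltn_ord.
  by exists (Ordinal xh) => //; apply: val_inj.
by rewrite card_imset ?card_ord // => y1 y2 /(congr1 val) /= e; exact: val_inj.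
Qed.

Lemma seg_prefixS i : seg_prefix i.+1 = seg_prefix i :|: seg_set i.
Proof.
apply/setP => x; rewrite !inE /in_seg.
have := seg_start_mono (leqnSn i); case: (ltnP x (seg_start a i)) => /=; lia.
Qed.

Lemma card_seg_set i : i < size a -> #|seg_set i| = nth 0 a i.
Proof.
move=> hi; have := cardsU (seg_prefix i) (seg_set i); rewrite -seg_prefixS.
have -> : seg_prefix i :&: seg_set i = set0.
  by apply/setP => x; rewrite !inE /in_seg; case: (ltnP x (seg_start a i)) => h //=; rewrite leqNgt h.
by rewrite cards0 subn0 /seg_prefix !card_ord_lt ?seg_start_le_sumn // seg_startS //; lia.
Qed.

Lemma seg_prefix0 : seg_prefix 0 = set0.
Proof. by apply/setP => x; rewrite !inE seg_start0. Qed.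

Lemma seg_prefix_size : seg_prefix (size a) = [set: 'I_(sumn a)].
Proof. by apply/setP => x; rewrite !inE seg_start_size ltn_ord. Qed.

Lemma card_admissible_seg_prefixS i j : i < size a ->
  #|admissible_partitions seg_of (seg_prefix i.+1) j| =
  \sum_(0 <= l < j.+1) 'C(nth 0 a i, l) * Pn (j - l) (nth 0 a i - l) *
     #|admissible_partitions seg_of (seg_prefix i) (j - l)|.
Proof.
move=> hi; rewrite seg_prefixS (@card_admissible_partitions_add_class _ _ _ _ _ (Some (Ordinal hi))).
- by rewrite card_seg_set.
- by move=> y; rewrite inE seg_ofE /in_seg /=; lia.
by move=> y; rewrite inE => h; apply/eqP; rewrite seg_ofE.
Qed.

End Segments.

Definition Qformula (N a1 n : nat) (b : nat -> nat) (j : nat) : nat :=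
  \sum_(l : {ffun 'I_n -> 'I_N.+1} |
          [forall c, l c <= b c] && (\sum_(c : 'I_n) (l c : nat) + a1 == j))
     \prod_(c : 'I_n) ('C(b c, l c) * Pn (a1 + \sum_(i : 'I_n | i < c) (l i : nat)) (b c - l c)).

Lemma Qformula0 N a1 b j : Qformula N a1 0 b j = (a1 == j).
Proof.
rewrite /Qformula big_mkcond (big_pred1 [ffun i : 'I_0 => ord0 : 'I_N.+1]).
  rewrite big_ord0 big_ord0 add0n.
  have -> : [forall c, [ffun i : 'I_0 => ord0 : 'I_N.+1] c <= b c] by apply/forallP => -[].
  by case: (a1 == j).
by move=> f; apply/esym/eqP/ffunP => -[].
Qed.

Section SnocFfun.
Variables (X : finType) (n : nat).

Definition snoc_ffun (p : X * {ffun 'I_n -> X}) : {ffun 'I_n.+1 -> X} :=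
  [ffun i => if unlift ord_max i is Some i' then p.2 i' else p.1].

Lemma snoc_ffun_max p : snoc_ffun p ord_max = p.1.
Proof. by rewrite ffunE unlift_none. Qed.

Lemma snoc_ffun_lift p i : snoc_ffun p (lift ord_max i) = p.2 i.
Proof. by rewrite ffunE liftK. Qed.

Lemma snoc_ffun_bij : bijective snoc_ffun.
Proof.
exists (fun f : {ffun 'I_n.+1 -> X} => (f ord_max, [ffun i => f (lift ord_max i)])) => [[x g]|f].
  by rewrite snoc_ffun_max; congr pair; apply/ffunP => i; rewrite ffunE snoc_ffun_lift.
apply/ffunP => i; rewrite ffunE; case: unliftP => [i' ->|->] //=.
by rewrite ffunE.
Qed.

Lemma sum_snoc_ffun_lt (F : X -> nat) x g (c : 'I_n) :
  \sum_(i < n.+1 | i < lift ord_max c) F (snoc_ffun (x, g) i) = \sum_(i < n | i < c) F (g i).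
Proof.
rewrite big_mkcond (bigD1_ord ord_max) // [RHS]big_mkcond.
have -> : ((ord_max : 'I_n.+1) < lift ord_max c) = false by rewrite lift_max ltnNge ltnW.
by apply: eq_bigr => i _; rewrite !lift_max snoc_ffun_lift.
Qed.

Lemma sum_snoc_ffun_max (F : X -> nat) x g :
  \sum_(i < n.+1 | i < (ord_max : 'I_n.+1)) F (snoc_ffun (x, g) i) = \sum_(i < n) F (g i).
Proof.
rewrite big_mkcond (bigD1_ord ord_max) // ltnn.
by apply: eq_bigr => i _; rewrite lift_max ltn_ord snoc_ffun_lift.
Qed.

End SnocFfun.

Lemma sum_ord_trunc (N j b : nat) (F : nat -> nat) : b <= N -> (forall l, b < l -> F l = 0) ->
  \sum_(x < N.+1) (if x <= j then F x else 0) = \sum_(0 <= l < j.+1) F l.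
Proof.
move=> hb hF.
rewrite -(big_mkord xpredT (fun x => if x <= j then F x else 0)).
rewrite (@big_nat_widen _ _ _ 0 N.+1 (N.+1 + j.+1)) ?leq_addr //.
rewrite [RHS](@big_nat_widen _ _ _ 0 j.+1 (N.+1 + j.+1)) ?leq_addl //.
rewrite big_mkcond [RHS]big_mkcond; apply: eq_bigr => i _ /=.
rewrite !ltnS; case: (leqP i j) => hij; case: leqP => // hN.
by rewrite hF //; lia.
Qed.

Lemma sum_pair (I J : finType) (F : I * J -> nat) :
  \sum_(p : I * J) F p = \sum_(i : I) \sum_(j : J) F (i, j).
Proof. by rewrite pair_bigA; apply: eq_bigr => -[]. Qed.

Section QformulaStep.
Variables (N a1 n : nat) (b : nat -> nat).
Local Notation X := 'I_N.+1.

Lemma Qformula_term_snoc x (g : {ffun 'I_n -> X}) :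
  \prod_(c < n.+1) ('C(b c, snoc_ffun (x, g) c) *
      Pn (a1 + \sum_(i < n.+1 | i < c) (snoc_ffun (x, g) i : nat)) (b c - snoc_ffun (x, g) c)) =
  'C(b n, x) * Pn (a1 + \sum_(i < n) (g i : nat)) (b n - x) *
  \prod_(c < n) ('C(b c, g c) * Pn (a1 + \sum_(i < n | i < c) (g i : nat)) (b c - g c)).
Proof.
rewrite (bigD1_ord ord_max) // snoc_ffun_max sum_snoc_ffun_max; congr (_ * _).
by apply: eq_bigr => c _; rewrite snoc_ffun_lift sum_snoc_ffun_lt lift_max.
Qed.

Lemma Qformula_cond_snoc j x (g : {ffun 'I_n -> X}) :
  [forall c, snoc_ffun (x, g) c <= b c] && (\sum_(c < n.+1) (snoc_ffun (x, g) c : nat) + a1 == j)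
  = [&& x <= b n, [forall c, g c <= b c] & x + \sum_(c < n) (g c : nat) + a1 == j].
Proof.
have -> : [forall c, snoc_ffun (x, g) c <= b c] = (x <= b n) && [forall c, g c <= b c].
  apply/forallP/andP => [H|[H1 /forallP H2] c].
    split; first by have := H ord_max; rewrite snoc_ffun_max.
    by apply/forallP => c; have := H (lift ord_max c); rewrite snoc_ffun_lift lift_max.
  by case: (unliftP ord_max c) => [c' ->|->]; rewrite ?snoc_ffun_lift ?lift_max ?snoc_ffun_max.
rewrite (bigD1_ord ord_max) // snoc_ffun_max -andbA.
by rewrite (eq_bigr (fun c => g c : nat)) // => c _; rewrite snoc_ffun_lift.
Qed.

Lemma QformulaS j : b n <= N ->
  Qformula N a1 n.+1 b j =
  \sum_(0 <= l < j.+1) 'C(b n, l) * Pn (j - l) (b n - l) * Qformula N a1 n b (j - l).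
Proof.
move=> hb; rewrite /Qformula big_mkcond (reindex (@snoc_ffun _ n)) /=; last first.
  exact: onW_bij (snoc_ffun_bij _ _).
rewrite sum_pair -(@sum_ord_trunc N j (b n)) => [|//|l hl]; last first.
  by rewrite bin_small // !mul0n.
apply: eq_bigr => x _; case: (leqP x j) => hxj; last first.
  apply: big1 => g _; rewrite Qformula_cond_snoc.
  by case: eqP => [e|]; rewrite ?andbF //; lia.
rewrite big_distrr /= [RHS]big_mkcond; apply: eq_bigr => g _.
rewrite Qformula_cond_snoc Qformula_term_snoc.
case: (leqP x (b n)) => hxb /=; last by rewrite bin_small // !mul0n; case: ifP.
set S := \sum_(c < n) (g c : nat).
have -> : (x + S + a1 == j) = (S + a1 == j - x) by apply/eqP/eqP; lia.
case: ifP => [/andP[_ /eqP e]|_] //.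
by rewrite (_ : a1 + S = j - x) ?mulnA //; lia.
Qed.

End QformulaStep.

Lemma bin_Pn0 n j : 'C(n, j) * Pn 0 (n - j) = (n == j).
Proof.
case: (ltngtP n j) => h; first by rewrite bin_small.
  by rewrite (_ : n - j = (n - j).-1.+1) ?Pn0S ?muln0 //; lia.
by rewrite h subnn Pnn0 binn.
Qed.

Lemma card_admissible_seg_prefix (a : seq nat) i j : i < size a ->
  #|admissible_partitions (@seg_of a) (seg_prefix a i.+1) j| =
  Qformula (sumn a) (nth 0 a 0) i (fun c => nth 0 a c.+1) j.
Proof.
elim: i j => [|i IH] j hi.
  rewrite card_admissible_seg_prefixS // Qformula0 seg_prefix0 big_nat_recr //=.
  rewrite card_admissible_partitions_set0 subnn eqxx muln1 bin_Pn0 big_nat_cond big1 //.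
  move=> l /andP[/andP[_ hl] _].
  by rewrite card_admissible_partitions_set0 subn_eq0 leqNgt hl muln0.
rewrite card_admissible_seg_prefixS // QformulaS ?nth_le_sumn //.
by apply: eq_bigr => l _; rewrite IH // ltnW.
Qed.

Unset Implicit Arguments.

Theorem mainTheorem3 (a : seq nat) (j : nat) :
  2 <= size a -> all (fun x => 0 < x) a -> 1 <= j ->
  #|Qset a j| =
  \sum_(l : {ffun 'I_(size a).-1 -> 'I_(sumn a).+1} |
          [forall c, l c <= nth 0 a c.+1] &&
          (\sum_(c : 'I_(size a).-1) (l c : nat) + nth 0 a 0 == j))
     \prod_(c : 'I_(size a).-1)
        ('C(nth 0 a c.+1, l c) *
         Pn (nth 0 a 0 + \sum_(i : 'I_(size a).-1 | i < c) (l i : nat))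
            (nth 0 a c.+1 - l c)).
Proof.
move=> size_a _ _; have size_gt0 : 0 < size a by apply: ltnW.
have := @card_admissible_seg_prefix a (size a).-1 j.
by rewrite prednK // seg_prefix_size -QsetE; apply.
Qed.
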